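(* Let $\Gamma$ be a group with a strictly decreasing sequence $\{\Gamma_n\}$ of finite-index normal subgroups with trivial intersection, $Z=\varprojlim\Gamma/\Gamma_n$ with the left translation action, $\pi_n:Z\to\Gamma/\Gamma_n$ the quotient maps, and for $n\ge2$ let $\gamma_n\in\Gamma_{n-1}\setminus\Gamma_n$ and $C_n=\pi_n^{-1}(\gamma_n\Gamma_n)$. Let $s_1,s_2\in\Gamma$ and $z,z'\in Z$ with $s_1z,s_2z\in C_n$ and $s_2z'\in C_m$ ($n,m\ge2$). Then $m=n$ if and only if $s_1z'\in C_n$.
   Context: $Z=\varprojlim\Gamma/\Gamma_n$ is the compact group of compatible sequences in $\prod_n\Gamma/\Gamma_n$, containing $\Gamma$ as a subgroup. (In the paper $\Gamma$ is a finitely generated nonabelian free group.) *)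

From HB Require Import structures.
From mathcomp Require Import all_boot monoid.
Set Implicit Arguments. Unset Strict Implicit. Unset Printing Implicit Defensive.
Local Open Scope group_scope.

Section Defs.
Variable G : groupType.

Definition normal_subgroup (H : G -> Prop) : Prop :=
  [/\ H 1, (forall x y, H x -> H y -> H (x * y^-1))
    & (forall x g, H x -> H (g^-1 * x * g))].

Definition lcoset (H : G -> Prop) (g : G) : G -> Prop := fun x => H (g^-1 * x).

Definition finite_index (H : G -> Prop) : Prop :=
  exists s : seq G, forall g : G, exists2 r, r \in s & lcoset H r g.

Definition strict_subset (K H : G -> Prop) : Prop :=
  (forall x, K x -> H x) /\ (exists x, H x /\ ~ K x).

(* Points of Z = lim_{<-} Gamma/Gamma_n (n >= 1): compatible sequences of cosets.
   z n is the n-th coordinate pi_n(z) in Gamma/Gamma_n, a left coset of Gamma_n.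
   (The coordinate n = 0 is unused.) *)
Definition in_Z (Gam : nat -> G -> Prop) (z : nat -> G -> Prop) : Prop :=
  (forall n, (1 <= n)%N -> exists g, z n = lcoset (Gam n) g) /\
  (forall n, (1 <= n)%N -> forall g,
      z n.+1 = lcoset (Gam n.+1) g -> z n = lcoset (Gam n) g).

Definition actZ (s : G) (z : nat -> G -> Prop) : nat -> G -> Prop :=
  fun n x => z n (s^-1 * x).

Definition piZ (z : nat -> G -> Prop) (n : nat) : G -> Prop := z n.

Definition Cset (Gam : nat -> G -> Prop) (gam : nat -> G) (n : nat)
  (z : nat -> G -> Prop) : Prop :=
  piZ z n = lcoset (Gam n) (gam n).

End Defs.

From HB Require Import structures.
From mathcomp Require Import all_boot monoid.
From Stdlib Require Import FunctionalExtensionality PropExtensionality.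
Local Open Scope group_scope.

(* Since [s1] and [s2] send [pi_n z] to the same coset and [Gamma_n] is normal,
   [s1^-1 s2] lies in [Gamma_n]; hence [s1 z'] and [s2 z'] have the same image
   in [Gamma/Gamma_n], so [s1 z' \in C_n] iff [s2 z' \in C_n].  It remains that
   the [C_k] are pairwise disjoint: for [m < n], a point of [C_n] projects to
   [gamma_n Gamma_m = Gamma_m] in [Gamma/Gamma_m], while [gamma_m \notin Gamma_m]. *)

Section NormalSubgroup.
Context {G : groupType} {H : G -> Prop} (HN : normal_subgroup H).

Lemma nsg1 : H 1.
Proof. by case: HN. Qed.

Lemma nsgV {x} : H x -> H x^-1.
Proof. by case: HN => h1 hB _ hx; have := hB 1 x h1 hx; rewrite mul1g. Qed.

Lemma nsgM {x y} : H x -> H y -> H (x * y).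
Proof. by case: HN => _ hB _ hx /nsgV hy; have := hB x y^-1 hx hy; rewrite invgK. Qed.

Lemma nsgJ {x} g : H x -> H (g^-1 * x * g).
Proof. by case: HN => _ _ hJ; apply: hJ. Qed.

Lemma eq_lcoset g h : lcoset H g = lcoset H h <-> H (g^-1 * h).
Proof.
split=> [e | hgh].
  by have := f_equal (fun C => C h) e; rewrite /lcoset mulVg => ->; apply: nsg1.
apply: functional_extensionality => x; apply: propositional_extensionality.
rewrite /lcoset; split=> hx.
  by have := nsgM (nsgV hgh) hx; rewrite invgM invgK -mulgA mulVKg.
by have := nsgM hgh hx; rewrite -mulgA mulVKg.
Qed.

Lemma eq_lcosetMr x y g : lcoset H (x * g) = lcoset H (y * g) <-> H (x^-1 * y).
Proof.
rewrite eq_lcoset invgM !mulgA; split=> [hJ | hxy].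
  by have := nsgJ g^-1 hJ; rewrite invgK !mulgA mulgK mulgV mul1g.
by have := nsgJ g hxy; rewrite !mulgA.
Qed.

End NormalSubgroup.

Lemma actZ_lcoset {G : groupType} {H : G -> Prop} {z : nat -> G -> Prop} {k g} s :
  z k = lcoset H g -> actZ s z k = lcoset H (s * g).
Proof.
move=> e; apply: functional_extensionality => x.
by rewrite /actZ e /lcoset invgM mulgA.
Qed.

Section Tower.
Context {G : groupType} {Gam : nat -> G -> Prop} {gam : nat -> G}.
Hypothesis Hnormal : forall k, (1 <= k)%N -> normal_subgroup (Gam k).
Hypothesis Hdec : forall k, (1 <= k)%N -> strict_subset (Gam k.+1) (Gam k).
Hypothesis Hgam : forall k, (2 <= k)%N -> Gam k.-1 (gam k) /\ ~ Gam k (gam k).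

Lemma Gam_decr {j k x} : (1 <= j <= k)%N -> Gam k x -> Gam j x.
Proof.
case/andP=> hj; elim: k => [|k IH]; first by move/(leq_trans hj).
rewrite leq_eqVlt ltnS => /predU1P[-> // | hjk hx].
exact: IH hjk ((Hdec _ (leq_trans hj hjk)).1 x hx).
Qed.

Lemma in_Z_proj {z j k g} : in_Z Gam z -> (1 <= j <= k)%N ->
  z k = lcoset (Gam k) g -> z j = lcoset (Gam j) g.
Proof.
case=> _ hcompat /andP[hj]; elim: k => [|k IH]; first by move/(leq_trans hj).
rewrite leq_eqVlt ltnS => /predU1P[-> // | hjk e].
exact/IH/(hcompat _ (leq_trans hj hjk)).
Qed.

Lemma in_Z_actZ {z} s : in_Z Gam z -> in_Z Gam (actZ s z).
Proof.
move=> hz; split=> [k hk | k hk g e].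
  by have [b zb] := hz.1 k hk; exists (s * b); apply: actZ_lcoset.
have [b zb] := hz.1 k.+1 isT.
have /(eq_lcoset (Hnormal k.+1 isT)) hbg : lcoset (Gam k.+1) (s * b) = lcoset (Gam k.+1) g.
  by rewrite -e; apply/esym/actZ_lcoset.
rewrite (actZ_lcoset s (hz.2 k hk b zb)); apply/(eq_lcoset (Hnormal _ hk)).
by apply: Gam_decr hbg; rewrite hk leqnSn.
Qed.

Lemma Cset_actZ {z k g} s : z k = lcoset (Gam k) g ->
  Cset Gam gam k (actZ s z) <-> lcoset (Gam k) (s * g) = lcoset (Gam k) (gam k).
Proof. by move=> /(actZ_lcoset s) e; rewrite /Cset /piZ e. Qed.

Lemma Cset_actZ_congr {n s1 s2 z z'} : (1 <= n)%N -> in_Z Gam z -> in_Z Gam z' ->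
  Cset Gam gam n (actZ s1 z) -> Cset Gam gam n (actZ s2 z) ->
  Cset Gam gam n (actZ s1 z') <-> Cset Gam gam n (actZ s2 z').
Proof.
move=> hn hz hz' h1 h2.
have [a za] := hz.1 n hn; have [b zb] := hz'.1 n hn.
have /(eq_lcosetMr (Hnormal _ hn)) s12 : lcoset (Gam n) (s1 * a) = lcoset (Gam n) (s2 * a).
  by rewrite ((Cset_actZ _ za).1 h1) ((Cset_actZ _ za).1 h2).
have e : lcoset (Gam n) (s1 * b) = lcoset (Gam n) (s2 * b).
  exact/(eq_lcosetMr (Hnormal _ hn)).
by rewrite !(Cset_actZ _ zb) e.
Qed.

Lemma Cset_disjoint {w m n} : in_Z Gam w -> (2 <= m)%N -> (2 <= n)%N ->
  Cset Gam gam m w -> Cset Gam gam n w -> m = n.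
Proof.
move=> hw; wlog hmn : m n / (m < n)%N.
  move=> wlog_mn hm hn hCm hCn; case: (ltngtP m n) => [lt_mn | lt_nm | //].
    exact: wlog_mn hCm hCn.
  exact/esym/(wlog_mn n m).
rewrite /Cset /piZ => hm hn hCm hCn; exfalso.
have hm1 : (1 <= m)%N by apply: ltnW.
have HNm := Hnormal _ hm1.
have wm : w m = lcoset (Gam m) (gam n).
  by apply: (in_Z_proj hw _ hCn); rewrite hm1 ltnW.
have gam_n : Gam m (gam n).
  by apply: Gam_decr (Hgam _ hn).1; rewrite hm1 -ltnS (ltn_predK hmn).
have /(eq_lcoset HNm) gam_mn : lcoset (Gam m) (gam m) = lcoset (Gam m) (gam n).
  by rewrite -hCm.
apply: (Hgam _ hm).2; rewrite -[gam m]invgK; apply: (nsgV HNm).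
by rewrite -(mulgK (gam n) (gam m)^-1); apply: (nsgM HNm gam_mn (nsgV HNm gam_n)).
Qed.

End Tower.

Theorem lemma5p8 (G : groupType) (Gam : nat -> G -> Prop) (gam : nat -> G)
  (Hnormal : forall k, (1 <= k)%N -> normal_subgroup (Gam k))
  (Hfin : forall k, (1 <= k)%N -> finite_index (Gam k))
  (Hdec : forall k, (1 <= k)%N -> strict_subset (Gam k.+1) (Gam k))
  (Htriv : forall x : G, (forall k, (1 <= k)%N -> Gam k x) -> x = 1)
  (Hgam : forall k, (2 <= k)%N -> Gam k.-1 (gam k) /\ ~ Gam k (gam k))
  (n m : nat) (hn : (2 <= n)%N) (hm : (2 <= m)%N)
  (s1 s2 : G) (z z' : nat -> G -> Prop)
  (hz : in_Z Gam z) (hz' : in_Z Gam z')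
  (h1 : Cset Gam gam n (actZ s1 z)) (h2 : Cset Gam gam n (actZ s2 z))
  (h3 : Cset Gam gam m (actZ s2 z')) :
  m = n <-> Cset Gam gam n (actZ s1 z').
Proof.
have s1_s2 := Cset_actZ_congr Hnormal (ltnW hn) hz hz' h1 h2.
split=> [emn | hC].
  by rewrite s1_s2 -emn.
apply: (Cset_disjoint Hnormal Hdec Hgam (in_Z_actZ Hnormal Hdec s2 hz') hm hn h3).
exact/s1_s2.
Qed.
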